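(* For every $\gamma>0$ there exists a density operator $\varrho$ on ${\cal H}$ with $0<\operatorname{tr}[\varrho H]<\infty$ such that $$\left\|\widetilde\varrho_{-}-\frac{{\cal N}_{-}(\gamma)[\varrho]}{\operatorname{tr}\big[{\cal N}_{-}(\gamma)[\varrho]\big]}\right\|_1\ \ge\ \tfrac12\ln(e-1),$$ and (for every $\gamma>0$) there likewise exists a density operator $\varrho$ with $\operatorname{tr}[\varrho H]<\infty$ such that $$\left\|\widetilde\varrho_{+}-\frac{{\cal N}_{+}(\gamma)[\varrho]}{\operatorname{tr}\big[{\cal N}_{+}(\gamma)[\varrho]\big]}\right\|_1\ \ge\ \tfrac12\ln(e-1).$$
   Context: ${\cal H}$ is a separable Hilbert space with orthonormal (Fock) basis $\{|n\rangle\}_{n=0}^{\infty}$; $a=\sum_{n\ge1}\sqrt{n}\,|n-1\rangle\langle n|$, $a^{\dagger}=\sum_{n\ge0}\sqrt{n+1}\,|n+1\rangle\langle n|$, $H=a^{\dagger}a$. For a density operator $\varrho$, $\operatorname{tr}[\varrho H^k]=\sum_n n^k\langle n|\varrho|n\rangle$. Ideal photon subtraction/addition outputs (defined when $\operatorname{tr}[\varrho H]<\infty$, and for subtraction also $\operatorname{tr}[\varrho H]>0$): $\widetilde\varrho_{-}=a\varrho a^{\dagger}/\operatorname{tr}[a\varrho a^{\dagger}]$, $\widetilde\varrho_{+}=a^{\dagger}\varrho a/\operatorname{tr}[a^{\dagger}\varrho a]$. For $\gamma>0$, the approximate photon subtraction and addition operations are ${\cal N}_{-}(\gamma)[\varrho]=(e^{2\gamma}-1)\,a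 e^{-\gamma H}\varrho e^{-\gamma H}a^{\dagger}$ and ${\cal N}_{+}(\gamma)[\varrho]=(e^{2\gamma}-1)\,e^{-\gamma H}a^{\dagger}\varrho a e^{-\gamma H}$. The trace norm is $\|X\|_1=\operatorname{tr}\sqrt{X^{\dagger}X}$. *)

(* classical reals.  Operators on H = l^2(N) are represented
   by their (infinite) matrices in the Fock basis {|n>}: M m n = <m|M|n>. *)
From Stdlib Require Import Reals Lra Lia.
Open Scope R_scope.

Record C := mkC { re : R; im : R }.
Definition C0 : C := mkC 0 0.
Definition Cadd (z w : C) : C := mkC (re z + re w) (im z + im w).
Definition Cmul (z w : C) : C :=
  mkC (re z * re w - im z * im w) (re z * im w + im z * re w).
Definition Cconj (z : C) : C := mkC (re z) (- im z).
Definition Crscale (r : R) (z : C) : C := mkC (r * re z) (r * im z).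

Definition csum (f : nat -> C) (l : C) : Prop :=
  infinite_sum (fun k => re (f k)) (re l) /\
  infinite_sum (fun k => im (f k)) (im l).

Definition Mat := nat -> nat -> C.

Definition dagger (X : Mat) : Mat := fun i j => Cconj (X j i).
Definition mat_sub (X Y : Mat) : Mat :=
  fun i j => Cadd (X i j) (Crscale (-1) (Y i j)).
Definition mat_rscale (r : R) (X : Mat) : Mat := fun i j => Crscale r (X i j).

Definition mat_mul_rel (A B P : Mat) : Prop :=
  forall i j, csum (fun k => Cmul (A i k) (B k j)) (P i j).

Definition hermitian (M : Mat) : Prop := forall i j, M j i = Cconj (M i j).

Definition psd (M : Mat) : Prop :=
  forall (v : nat -> C) (N : nat),
    0 <= sum_f_R0 (fun i => sum_f_R0 (fun j =>
            re (Cmul (Cconj (v i)) (Cmul (M i j) (v j)))) N) N.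

(* tr X = t : the diagonal series converges to t (real part; for the
   self-adjoint operators it is applied to, the diagonal is real). *)
Definition trace_is (X : Mat) (t : R) : Prop :=
  infinite_sum (fun n => re (X n n)) t.

(* Density operator: positive (hermitian, psd) with trace 1 -- such a matrix
   is automatically a bounded trace-class operator. *)
Definition density (rho : Mat) : Prop :=
  hermitian rho /\ psd rho /\ trace_is rho 1.

(* tr[rho H] = t, with H = a^dag a = sum_n n |n><n|. *)
Definition trace_rhoH_is (rho : Mat) (t : R) : Prop :=
  infinite_sum (fun n => INR n * re (rho n n)) t.

(* ||X||_1 = tr sqrt(X^dag X) = t : there is a positive trace-class S
   (S = sqrt(X^dag X), unique) with S S = X^dag X and tr S = t. *)
Definition trace_norm_is (X : Mat) (t : R) : Prop :=
  exists S P : Mat,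
    hermitian S /\ psd S /\ trace_is S t /\
    mat_mul_rel (dagger X) X P /\ mat_mul_rel S S P.

(* Matrix entries, obtained by unfolding
   <m|a|k> = sqrt k [k = m+1], <m|a^dag|k> = sqrt m [k = m-1, m >= 1],
   <m|e^{-g H}|k> = e^{-g m} [k = m]. *)

(* a rho a^dag *)
Definition sub_ideal (rho : Mat) : Mat := fun m n =>
  Crscale (sqrt (INR (S m)) * sqrt (INR (S n))) (rho (S m) (S n)).

(* a^dag rho a *)
Definition add_ideal (rho : Mat) : Mat := fun m n =>
  match m, n with
  | S m', S n' => Crscale (sqrt (INR m) * sqrt (INR n)) (rho m' n')
  | _, _ => C0
  end.

(* N_-(g)[rho] = (e^{2g}-1) a e^{-gH} rho e^{-gH} a^dag *)
Definition N_minus (g : R) (rho : Mat) : Mat := fun m n =>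
  Crscale ((exp (2 * g) - 1) * sqrt (INR (S m)) * exp (- g * INR (S m))
             * exp (- g * INR (S n)) * sqrt (INR (S n)))
          (rho (S m) (S n)).

(* N_+(g)[rho] = (e^{2g}-1) e^{-gH} a^dag rho a e^{-gH} *)
Definition N_plus (g : R) (rho : Mat) : Mat := fun m n =>
  match m, n with
  | S m', S n' =>
      Crscale ((exp (2 * g) - 1) * exp (- g * INR m) * sqrt (INR m)
                 * sqrt (INR n) * exp (- g * INR n))
              (rho m' n')
  | _, _ => C0
  end.

(* Witnesses are two-level states rho = p|a><a| + q|b><b|, diagonal in the
   Fock basis.  For diagonal matrices everything is explicit: traces are sums
   of diagonal entries and the trace norm is the l^1 norm of the diagonal.
   The ideal outputs a rho a^dag and a^dag rho a are again diagonal, and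
   N_-(g)[rho], N_+(g)[rho] are these damped entrywise by the factor
   (e^{2g}-1) e^{-2gm}, m being the photon number before subtraction (resp.
   after addition); for our states m ranges over {1, n+1} with g n >= 1.
   Choosing q/p so that the ideal output has equal weights on its two levels,
   the normalised outputs are (1/2, 1/2) and (u, v)/(u+v) with
   v/u = e^{-2gn} <= 1/4, at trace distance (u-v)/(u+v) >= 3/5 > ln(e-1)/2. *)
From Pilot Require Import Defs.
From Stdlib Require Import Reals Lra Lia.
Open Scope R_scope.

Lemma C_ext (z w : Defs.C) : re z = re w -> im z = im w -> z = w.
Proof. destruct z, w; simpl; intros; subst; reflexivity. Qed.

Definition supported2 (g : nat -> R) (a b : nat) : Prop :=
  forall k, k <> a -> k <> b -> g k = 0.

Lemma sum_f_R0_single (g : nat -> R) (a N : nat) :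
  (forall k, k <> a -> g k = 0) ->
  sum_f_R0 g N = if Nat.leb a N then g a else 0.
Proof.
  intros Hg; induction N as [|N IH]; simpl.
  - destruct a; simpl; [reflexivity | apply Hg; lia].
  - rewrite IH. destruct (Nat.eq_dec a (S N)) as [->|Hne].
    + rewrite (Nat.leb_refl (S N)).
      replace (Nat.leb (S N) N) with false by (symmetry; apply Nat.leb_gt; lia). ring.
    + rewrite (Hg (S N)) by lia.
      destruct (Nat.leb_spec a N), (Nat.leb_spec a (S N)); try lia; ring.
Qed.

Lemma infinite_sum_single (g : nat -> R) (a : nat) :
  (forall k, k <> a -> g k = 0) -> infinite_sum g (g a).
Proof.
  intros Hg eps Heps; exists a; intros N HN.
  rewrite (sum_f_R0_single g a N Hg).
  replace (Nat.leb a N) with true by (symmetry; apply Nat.leb_le; lia).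
  unfold Rdist; rewrite Rminus_diag, Rabs_R0; lra.
Qed.

Lemma infinite_sum_two (g : nat -> R) (a b : nat) (l : R) :
  a <> b -> supported2 g a b -> g a + g b = l -> infinite_sum g l.
Proof.
  intros Hab Hg <-.
  set (ga := fun k => if Nat.eqb k a then g k else 0).
  set (gb := fun k => if Nat.eqb k a then 0 else g k).
  assert (Ha : infinite_sum ga (ga a)).
  { apply infinite_sum_single; intros k Hk; unfold ga.
    destruct (Nat.eqb_spec k a); [contradiction | reflexivity]. }
  assert (Hb : infinite_sum gb (gb b)).
  { apply infinite_sum_single; intros k Hk; unfold gb.
    destruct (Nat.eqb_spec k a); [reflexivity | apply Hg; assumption]. }
  unfold ga, gb in Ha, Hb; rewrite Nat.eqb_refl in Ha.
  destruct (Nat.eqb_spec b a) as [->|_] in Hb; [contradiction|].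
  assert (Hsum := CV_plus _ _ _ _ Ha Hb).
  intros eps Heps; destruct (Hsum eps Heps) as [N HN]; exists N; intros n Hn.
  rewrite <- (sum_eq (fun k => ga k + gb k)), plus_sum
    by (intros k _; unfold ga, gb; destruct (Nat.eqb k a); ring).
  apply HN; assumption.
Qed.

Definition diag_mat (d : nat -> R) : Mat :=
  fun i j => if Nat.eqb i j then mkC (d i) 0 else C0.

Definition is_diag (X : Mat) (d : nat -> R) : Prop :=
  forall i j, X i j = diag_mat d i j.

Lemma diag_mat_is_diag (d : nat -> R) : is_diag (diag_mat d) d.
Proof. intros i j; reflexivity. Qed.

Lemma diag_hermitian (X : Mat) (d : nat -> R) : is_diag X d -> hermitian X.
Proof.
  intros HX i j; rewrite !HX; unfold diag_mat; rewrite Nat.eqb_sym.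
  destruct (Nat.eqb_spec i j); subst; apply C_ext; simpl; ring.
Qed.

(* A diagonal matrix with nonnegative diagonal is positive semidefinite:
   <v, X v> = sum_i d i |v i|^2. *)
Lemma diag_psd (X : Mat) (d : nat -> R) :
  is_diag X d -> (forall i, 0 <= d i) -> psd X.
Proof.
  intros HX Hd v N.
  apply Rle_trans with
    (sum_f_R0 (fun i => d i * (re (v i) * re (v i) + im (v i) * im (v i))) N).
  { apply cond_pos_sum; intros i; apply Rmult_le_pos; [apply Hd | nra]. }
  right; apply sum_eq; intros i Hi.
  rewrite (sum_f_R0_single _ i N).
  - replace (Nat.leb i N) with true by (symmetry; apply Nat.leb_le; lia).
    rewrite HX; unfold diag_mat; rewrite Nat.eqb_refl; simpl; ring.
  - intros k Hk; rewrite HX; unfold diag_mat.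
    destruct (Nat.eqb_spec i k); [congruence | simpl; ring].
Qed.

Lemma diag_trace (X : Mat) (d : nat -> R) (t : R) :
  is_diag X d -> infinite_sum d t -> trace_is X t.
Proof.
  intros HX Hd eps Heps; destruct (Hd eps Heps) as [N HN]; exists N; intros n Hn.
  rewrite (sum_eq _ d); [apply HN; assumption|].
  intros k _; rewrite HX; unfold diag_mat; rewrite Nat.eqb_refl; reflexivity.
Qed.

Lemma diag_dagger (X : Mat) (d : nat -> R) : is_diag X d -> is_diag (dagger X) d.
Proof.
  intros HX i j; unfold dagger; rewrite HX; unfold diag_mat; rewrite Nat.eqb_sym.
  destruct (Nat.eqb_spec i j); subst; apply C_ext; simpl; ring.
Qed.

Lemma csum_single (f : nat -> Defs.C) (a : nat) :
  (forall k, k <> a -> f k = C0) -> csum f (f a).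
Proof.
  intros Hf; split;
    [apply (infinite_sum_single (fun k => re (f k))) |
     apply (infinite_sum_single (fun k => im (f k)))];
    intros k Hk; rewrite (Hf k Hk); reflexivity.
Qed.

Lemma diag_mul (A B P : Mat) (a b c : nat -> R) :
  is_diag A a -> is_diag B b -> is_diag P c -> (forall i, c i = a i * b i) ->
  mat_mul_rel A B P.
Proof.
  intros HA HB HP Hc i j.
  replace (P i j) with (Cmul (A i i) (B i j)).
  - apply (csum_single (fun k => Cmul (A i k) (B k j))).
    intros k Hk; rewrite HA; unfold diag_mat.
    destruct (Nat.eqb_spec i k); [congruence|]; apply C_ext; simpl; ring.
  - rewrite HA, HB, HP; unfold diag_mat; rewrite Nat.eqb_refl.
    destruct (Nat.eqb i j); apply C_ext; simpl; rewrite ?Hc; ring.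
Qed.

(* The trace norm of a diagonal matrix is the l^1 norm of its diagonal:
   sqrt(X^dag X) = diag |d|. *)
Lemma diag_trace_norm (X : Mat) (d : nat -> R) (t : R) :
  is_diag X d -> infinite_sum (fun i => Rabs (d i)) t -> trace_norm_is X t.
Proof.
  intros HX Ht.
  set (absd := fun i => Rabs (d i)).
  assert (HS : is_diag (diag_mat absd) absd) by apply diag_mat_is_diag.
  assert (HP : is_diag (diag_mat (fun i => d i * d i)) (fun i => d i * d i))
    by apply diag_mat_is_diag.
  exists (diag_mat absd), (diag_mat (fun i => d i * d i)).
  split; [exact (diag_hermitian _ _ HS)|].
  split; [apply (diag_psd _ _ HS); intros i; apply Rabs_pos|].
  split; [exact (diag_trace _ _ _ HS Ht)|].
  split; [exact (diag_mul _ _ _ _ _ _ (diag_dagger _ _ HX) HX HP (fun i => eq_refl))|].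
  apply (diag_mul _ _ _ _ _ _ HS HS HP).
  intros i; unfold absd; rewrite <- Rabs_mult; symmetry; apply Rabs_right; nra.
Qed.

Lemma diag_combination (X Y : Mat) (dX dY : nat -> R) (r s : R) :
  is_diag X dX -> is_diag Y dY ->
  is_diag (mat_sub (mat_rscale r X) (mat_rscale s Y)) (fun i => r * dX i - s * dY i).
Proof.
  intros HX HY i j; unfold mat_sub, mat_rscale; rewrite HX, HY; unfold diag_mat.
  destruct (Nat.eqb i j); apply C_ext; simpl; ring.
Qed.

Lemma ln_e_minus_1_lt_1 : ln (exp 1 - 1) < 1.
Proof.
  assert (He : 2 < exp 1) by (pose proof (exp_ineq1 1 ltac:(lra)); lra).
  apply Rlt_le_trans with (ln (exp 1)); [apply ln_increasing; lra | rewrite ln_exp; lra].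
Qed.

(* Trace distance between the uniform distribution on two points and
   (u, v)/(u+v): it equals (u-v)/(u+v) >= 3/5 as soon as 4v <= u. *)
Lemma two_point_distance (u v : R) :
  0 < v -> 4 * v <= u ->
  ln (exp 1 - 1) / 2 <= Rabs (/ 2 - u / (u + v)) + Rabs (/ 2 - v / (u + v)).
Proof.
  intros Hv Huv.
  assert (Hdiff : (/ 2 - v / (u + v)) - (/ 2 - u / (u + v)) = (u - v) / (u + v))
    by (field; lra).
  assert (Hbig : 1 / 2 <= (u - v) / (u + v)).
  { apply Rmult_le_reg_r with (u + v); [lra|].
    replace ((u - v) / (u + v) * (u + v)) with (u - v) by (field; lra); lra. }
  pose proof (Rle_abs (/ 2 - v / (u + v))).
  pose proof (Rle_abs (- (/ 2 - u / (u + v)))); rewrite Rabs_Ropp in *.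
  pose proof ln_e_minus_1_lt_1; lra.
Qed.

Lemma damped_two_level_distance (A B : Mat) (dA f : nat -> R) (a b : nat) (p : R) :
  a <> b -> supported2 dA a b -> dA a = p -> dA b = p -> 0 < p ->
  0 < f b -> 4 * f b <= f a ->
  is_diag A dA -> is_diag B (fun m => f m * dA m) ->
  exists tA tN t : R,
    trace_is A tA /\ trace_is B tN /\
    trace_norm_is (mat_sub (mat_rscale (/ tA) A) (mat_rscale (/ tN) B)) t /\
    ln (exp 1 - 1) / 2 <= t.
Proof.
  intros Hab Hsupp Ha Hb Hp Hfb Hratio HA HB.
  set (tA := dA a + dA b); set (tN := f a * dA a + f b * dA b).
  set (D := fun i => / tA * dA i - / tN * (f i * dA i)).
  assert (HD : supported2 D a b)
    by (intros k Hka Hkb; unfold D; rewrite (Hsupp k Hka Hkb); ring).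
  exists tA, tN, (Rabs (D a) + Rabs (D b)).
  split; [exact (diag_trace _ _ _ HA (infinite_sum_two _ _ _ _ Hab Hsupp eq_refl))|].
  split.
  { apply (diag_trace _ _ _ HB), (infinite_sum_two (fun m => f m * dA m) _ _ _ Hab);
      [intros k Hka Hkb; rewrite (Hsupp k Hka Hkb); ring | reflexivity]. }
  split.
  { apply (diag_trace_norm _ _ _ (diag_combination _ _ _ _ _ _ HA HB)),
      (infinite_sum_two (fun i => Rabs (D i)) _ _ _ Hab);
      [intros k Hka Hkb; rewrite (HD k Hka Hkb); apply Rabs_R0 | reflexivity]. }
  assert (HtN : 0 < f a * p + f b * p) by nra.
  replace (D a) with (/ 2 - f a / (f a + f b))
    by (unfold D, tA, tN; rewrite Ha, Hb; field; repeat split; lra).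
  replace (D b) with (/ 2 - f b / (f a + f b))
    by (unfold D, tA, tN; rewrite Ha, Hb; field; repeat split; lra).
  apply two_point_distance; assumption.
Qed.

(* Damping factor (e^{2g}-1) e^{-2gy} by which N_-(g) and N_+(g) attenuate level y. *)
Definition damping (g y : R) : R := (exp (2 * g) - 1) * exp (- g * y) ^ 2.

Lemma damping_pos (g y : R) : 0 < g -> 0 < damping g y.
Proof.
  intros Hg; unfold damping.
  pose proof (exp_ineq1 (2 * g) ltac:(lra)); pose proof (exp_pos (- g * y)).
  apply Rmult_lt_0_compat; [lra | apply pow_lt; assumption].
Qed.

(* Levels at least 1/g apart are damped with ratio at most e^{-2} <= 1/4. *)
Lemma damping_gap (g y z : R) :
  0 < g -> 1 <= g * (y - z) -> 4 * damping g y <= damping g z.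
Proof.
  intros Hg Hyz; unfold damping.
  assert (Hsplit : exp (- g * z) = exp (- g * y) * exp (g * (y - z)))
    by (rewrite <- exp_plus; f_equal; ring).
  assert (H2 : 2 <= exp (g * (y - z))) by (pose proof (exp_ineq1 (g * (y - z))); lra).
  pose proof (exp_pos (- g * y)); pose proof (exp_ineq1 (2 * g) ltac:(lra)).
  rewrite Hsplit, Rpow_mult_distr.
  assert (0 < exp (- g * y) ^ 2) by (apply pow_lt; assumption).
  assert (4 <= exp (g * (y - z)) ^ 2) by (simpl; nra).
  replace (4 * ((exp (2 * g) - 1) * exp (- g * y) ^ 2))
    with ((exp (2 * g) - 1) * (exp (- g * y) ^ 2 * 4)) by ring.
  apply Rmult_le_compat_l; [lra|].
  apply Rmult_le_compat_l; lra.
Qed.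

Lemma sqrt_INR_sq (n : nat) : sqrt (INR n) * sqrt (INR n) = INR n.
Proof. apply sqrt_sqrt, pos_INR. Qed.

Lemma sub_ideal_diag (w : nat -> R) :
  is_diag (sub_ideal (diag_mat w)) (fun m => INR (S m) * w (S m)).
Proof.
  intros i j; unfold sub_ideal, diag_mat; cbn [Nat.eqb].
  destruct (Nat.eqb_spec i j); subst; apply C_ext; cbn [re im Crscale C0]; try ring.
  replace (INR (S j) * w (S j)) with (sqrt (INR (S j)) * sqrt (INR (S j)) * w (S j))
    by (rewrite sqrt_INR_sq; reflexivity); ring.
Qed.

Lemma N_minus_diag (g : R) (w : nat -> R) :
  is_diag (N_minus g (diag_mat w))
    (fun m => damping g (INR (S m)) * (INR (S m) * w (S m))).
Proof.
  intros i j; unfold N_minus, damping, diag_mat; cbn [Nat.eqb].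
  destruct (Nat.eqb_spec i j); subst; apply C_ext; cbn [re im Crscale C0]; try ring.
  replace (INR (S j) * w (S j)) with (sqrt (INR (S j)) * sqrt (INR (S j)) * w (S j))
    by (rewrite sqrt_INR_sq; reflexivity); ring.
Qed.

Lemma add_ideal_diag (w : nat -> R) :
  is_diag (add_ideal (diag_mat w)) (fun m => INR m * w (Nat.pred m)).
Proof.
  intros [|i] [|j]; unfold add_ideal, diag_mat; cbn [Nat.eqb];
    try (apply C_ext; simpl; ring).
  destruct (Nat.eqb_spec i j); subst; apply C_ext; cbn [re im Crscale C0]; try ring.
  replace (INR (S j) * w (Nat.pred (S j))) with (sqrt (INR (S j)) * sqrt (INR (S j)) * w j)
    by (rewrite sqrt_INR_sq; reflexivity); ring.
Qed.

Lemma N_plus_diag (g : R) (w : nat -> R) :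
  is_diag (N_plus g (diag_mat w))
    (fun m => damping g (INR m) * (INR m * w (Nat.pred m))).
Proof.
  intros [|i] [|j]; unfold N_plus, damping, diag_mat; cbn [Nat.eqb];
    try (apply C_ext; simpl; ring).
  destruct (Nat.eqb_spec i j); subst; apply C_ext; cbn [re im Crscale C0]; try ring.
  replace (INR (S j) * w (Nat.pred (S j))) with (sqrt (INR (S j)) * sqrt (INR (S j)) * w j)
    by (rewrite sqrt_INR_sq; reflexivity); ring.
Qed.

Definition two_point (a b : nat) (p q : R) : nat -> R :=
  fun k => if Nat.eqb k a then p else if Nat.eqb k b then q else 0.

Section TwoPoint.
Variables (a b : nat) (p q : R).
Hypothesis Hab : a <> b.

Lemma two_point_supported : supported2 (two_point a b p q) a b.
Proof.
  intros k Hka Hkb; unfold two_point.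
  destruct (Nat.eqb_spec k a), (Nat.eqb_spec k b); congruence.
Qed.

Lemma two_point_a : two_point a b p q a = p.
Proof. unfold two_point; rewrite Nat.eqb_refl; reflexivity. Qed.

Lemma two_point_b : two_point a b p q b = q.
Proof.
  unfold two_point; rewrite Nat.eqb_refl.
  destruct (Nat.eqb_spec b a); [congruence | reflexivity].
Qed.

Lemma two_level_density :
  0 <= p -> 0 <= q -> p + q = 1 -> density (diag_mat (two_point a b p q)).
Proof.
  intros Hp Hq Hpq; pose proof (diag_mat_is_diag (two_point a b p q)) as Hd.
  split; [exact (diag_hermitian _ _ Hd)|].
  split.
  - apply (diag_psd _ _ Hd); intros k; unfold two_point.
    destruct (Nat.eqb k a); [lra|]; destruct (Nat.eqb k b); lra.
  - apply (diag_trace _ _ _ Hd).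
    apply (infinite_sum_two _ _ _ _ Hab two_point_supported).
    rewrite two_point_a, two_point_b; exact Hpq.
Qed.

Lemma two_level_energy :
  trace_rhoH_is (diag_mat (two_point a b p q)) (INR a * p + INR b * q).
Proof.
  unfold trace_rhoH_is.
  apply (infinite_sum_two _ _ _ _ Hab); unfold diag_mat.
  - intros k Hka Hkb; rewrite Nat.eqb_refl; cbn [re].
    rewrite (two_point_supported k Hka Hkb); ring.
  - rewrite !Nat.eqb_refl; cbn [re]; rewrite two_point_a, two_point_b; reflexivity.
Qed.

End TwoPoint.

(* Weights with x q = p: in the witnesses below, the ideal output carries
   weight 1 * p on one level and x * q on the other, so these agree. *)
Lemma balanced_weights (x : R) :
  0 < x -> exists p q : R, 0 < p /\ 0 < q /\ p + q = 1 /\ x * q = p.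
Proof.
  intros Hx; exists (x / (x + 1)), (/ (x + 1)).
  assert (0 < / (x + 1)) by (apply Rinv_0_lt_compat; lra).
  split; [apply Rdiv_lt_0_compat; lra|].
  split; [assumption|].
  split; field; lra.
Qed.

Section Witnesses.
Variables (g : R) (n : nat).
Hypothesis Hg : 0 < g.
(* Photon-number gap n between the two output levels, with g n >= 1. *)
Hypothesis Hgap : 1 <= g * INR n.

Lemma gap_nonzero : n <> 0%nat.
Proof. intros ->; simpl in Hgap; lra. Qed.

Lemma damping_levels : 4 * damping g (INR (S n)) <= damping g (INR 1).
Proof. apply damping_gap; [assumption | rewrite S_INR, INR_1; ring_simplify; lra]. Qed.

(* rho = p|1><1| + q|n+1><n+1| witnesses the subtraction bound. *)
Lemma subtraction_witness :
  exists (rho : Mat) (tH tA tN t : R),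
    density rho /\
    trace_rhoH_is rho tH /\ 0 < tH /\
    trace_is (sub_ideal rho) tA /\
    trace_is (N_minus g rho) tN /\
    trace_norm_is
      (mat_sub (mat_rscale (/ tA) (sub_ideal rho))
               (mat_rscale (/ tN) (N_minus g rho))) t /\
    ln (exp 1 - 1) / 2 <= t.
Proof.
  pose proof gap_nonzero as Hn.
  destruct (balanced_weights (INR (S n)) (lt_0_INR _ (Nat.lt_0_succ n)))
    as (p & q & Hp & Hq & Hpq & Hbal).
  assert (Hlev : (1 <> S n)%nat) by lia.
  set (w := two_point 1 (S n) p q).
  destruct (damped_two_level_distance (sub_ideal (diag_mat w)) (N_minus g (diag_mat w))
              (fun m => INR (S m) * w (S m)) (fun m => damping g (INR (S m))) 0 n p)
    as (tA & tN & t & HA & HN & Ht & Hbound).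
  - lia.
  - intros k Hk0 Hkn; unfold w; rewrite (two_point_supported 1 (S n) p q Hlev (S k))
      by lia; ring.
  - unfold w; rewrite two_point_a, INR_1; ring.
  - unfold w; rewrite two_point_b; [exact Hbal | exact Hlev].
  - exact Hp.
  - apply damping_pos, Hg.
  - exact damping_levels.
  - apply sub_ideal_diag.
  - apply N_minus_diag.
  - exists (diag_mat w), (INR 1 * p + INR (S n) * q), tA, tN, t.
    split; [apply two_level_density; [exact Hlev | lra ..]|].
    split; [exact (two_level_energy _ _ p q Hlev)|].
    split; [rewrite INR_1; pose proof (pos_INR (S n)); nra|].
    repeat split; assumption.
Qed.

(* rho = p|0><0| + q|n><n| witnesses the addition bound. *)
Lemma addition_witness :
  exists (rho : Mat) (tH tA tN t : R),
    density rho /\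
    trace_rhoH_is rho tH /\
    trace_is (add_ideal rho) tA /\
    trace_is (N_plus g rho) tN /\
    trace_norm_is
      (mat_sub (mat_rscale (/ tA) (add_ideal rho))
               (mat_rscale (/ tN) (N_plus g rho))) t /\
    ln (exp 1 - 1) / 2 <= t.
Proof.
  pose proof gap_nonzero as Hn.
  destruct (balanced_weights (INR (S n)) (lt_0_INR _ (Nat.lt_0_succ n)))
    as (p & q & Hp & Hq & Hpq & Hbal).
  assert (Hlev : (0 <> n)%nat) by lia.
  set (w := two_point 0 n p q).
  destruct (damped_two_level_distance (add_ideal (diag_mat w)) (N_plus g (diag_mat w))
              (fun m => INR m * w (Nat.pred m)) (fun m => damping g (INR m)) 1 (S n) p)
    as (tA & tN & t & HA & HN & Ht & Hbound).
  - lia.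
  - intros [|k] Hk1 Hkn; cbn [Nat.pred]; [rewrite INR_0; ring|].
    unfold w; rewrite (two_point_supported 0 n p q Hlev k) by lia; ring.
  - unfold w; cbn [Nat.pred]; rewrite two_point_a, INR_1; ring.
  - unfold w; cbn [Nat.pred]; rewrite two_point_b; [exact Hbal | exact Hlev].
  - exact Hp.
  - apply damping_pos, Hg.
  - exact damping_levels.
  - apply add_ideal_diag.
  - apply N_plus_diag.
  - exists (diag_mat w), (INR 0 * p + INR n * q), tA, tN, t.
    split; [apply two_level_density; [exact Hlev | lra ..]|].
    split; [exact (two_level_energy _ _ p q Hlev)|].
    repeat split; assumption.
Qed.

End Witnesses.

Lemma exists_gap (g : R) : 0 < g -> exists n : nat, 1 <= g * INR n.
Proof.
  intros Hg; destruct (archimed_cor1 g Hg) as [n [Hlt Hpos]].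
  exists n; assert (HnR : 0 < INR n) by (apply lt_0_INR; exact Hpos).
  apply Rmult_lt_compat_r with (r := INR n) in Hlt; [|exact HnR].
  rewrite Rinv_l in Hlt by lra; lra.
Qed.

Theorem proposition1 :
  forall g : R, 0 < g ->
  (exists (rho : Mat) (tH tA tN t : R),
      density rho /\
      trace_rhoH_is rho tH /\ 0 < tH /\
      trace_is (sub_ideal rho) tA /\
      trace_is (N_minus g rho) tN /\
      trace_norm_is
        (mat_sub (mat_rscale (/ tA) (sub_ideal rho))
                 (mat_rscale (/ tN) (N_minus g rho))) t /\
      ln (exp 1 - 1) / 2 <= t)
  /\
  (exists (rho : Mat) (tH tA tN t : R),
      density rho /\
      trace_rhoH_is rho tH /\
      trace_is (add_ideal rho) tA /\
      trace_is (N_plus g rho) tN /\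
      trace_norm_is
        (mat_sub (mat_rscale (/ tA) (add_ideal rho))
                 (mat_rscale (/ tN) (N_plus g rho))) t /\
      ln (exp 1 - 1) / 2 <= t).
Proof.
  intros g Hg; destruct (exists_gap g Hg) as [n Hn].
  split; [exact (subtraction_witness g n Hg Hn) | exact (addition_witness g n Hg Hn)].
Qed.
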